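(* Let $n\ge 2$, $z_1,\dots,z_n\in\mathbb{C}$, $D=\mathrm{diag}(z_1,\dots,z_n)$, $Q=I-\frac1nJ$ and $A=QDQ$. Let $\sigma_1\ge\sigma_2\ge\cdots\ge\sigma_n\ge0$ be the singular values of $A$. Then \[ e_k(\sigma_1,\dots,\sigma_{n-1})\le\frac{n-k}{n}\,e_k(|z_1|,\dots,|z_n|),\qquad k=1,\dots,n-1 . \]
   Context: $I$ is the $n\times n$ identity matrix and $J$ the $n\times n$ all-ones matrix. For a vector $(v_1,\dots,v_m)$, $e_k(v_1,\dots,v_m)=\sum_{1\le i_1<\cdots<i_k\le m}v_{i_1}\cdots v_{i_k}$ is the $k$-th elementary symmetric function. *)

From HB Require Import structures.
From mathcomp Require Import all_boot all_order all_algebra.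
From mathcomp Require Import complex.
From mathcomp Require Import reals.
Set Implicit Arguments. Unset Strict Implicit. Unset Printing Implicit Defensive.
Import Order.TTheory GRing.Theory Num.Theory.
Local Open Scope ring_scope.

Definition esymf (R : comNzRingType) (m k : nat) (v : 'I_m -> R) : R :=
  \sum_(S : {set 'I_m} | #|S| == k) \prod_(i in S) v i.

Definition adjC (R : rcfType) (m n : nat) (A : 'M[R[i]]_(m, n)) : 'M[R[i]]_(n, m) :=
  (map_mx (@conjc R) A)^T.

Definition singular_values_of (R : rcfType) (n : nat) (A : 'M[R[i]]_n)
  (sigma : 'I_n -> R) : Prop :=
  [/\ forall i, 0 <= sigma i,
      forall i j : 'I_n, (i <= j)%N -> sigma j <= sigma i
    & char_poly (adjC A *m A) = \prod_(i < n) ('X - ((sigma i ^+ 2)%:C)%C%:P)].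

From HB Require Import structures.
From mathcomp Require Import all_boot all_order all_algebra.
From mathcomp Require Import fingroup perm complex reals mpoly spectral sesquilinear.
From mathcomp Require Import ring.
Set Implicit Arguments. Unset Strict Implicit. Unset Printing Implicit Defensive.
Import Order.TTheory GRing.Theory Num.Theory.
Local Open Scope ring_scope.

(* Diagonalize A^* A = V diag(mu^2) V^* with V unitary and mu >= 0 (the
   singular values), and let G := A V diag(mu)^-1, so that G^* G is a diagonal
   0/1 matrix and G^* (Q D Q) V = diag mu.  By the Cauchy-Binet formula for
   k x k minors, for |T| = k
     mu_T = sum_(|S| = k) (G^* Q)[T,S] z_S (Q V)[S,T].
   After |x y| <= (|x|^2 + |y|^2) / 2 it remains to bound, for each S, the
   sums over T of |(Q V)[S,T]|^2 and of |(G^* Q)[T,S]|^2 by the principal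
   minor Q[S,S] = 1 - k/n: the first is equal to it because Q V V^* Q^* = Q,
   the second is at most it by Bessel's inequality, the k x k minors of G
   being orthogonal with norms at most 1.  Hence e_k(mu) <= (1 - k/n) e_k(|z|),
   and dropping one singular value only decreases e_k. *)

Section EnumNth.
Variables (m : nat) (x0 : 'I_m).

(* The [i]-th element of [S] in increasing order; the length [k] is a free
   index, meaningful only when [#|S| = k]. *)
Definition enum_nth (S : {set 'I_m}) k (i : 'I_k) : 'I_m := nth x0 (enum S) i.

Variables (S : {set 'I_m}) (k : nat).
Hypothesis cardS : #|S| = k.

Lemma mem_enum_nth (i : 'I_k) : enum_nth S i \in S.
Proof. by rewrite /enum_nth -mem_enum mem_nth // -cardE cardS. Qed.

Lemma enum_nth_inj : injective (@enum_nth S k).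
Proof.
move=> i j /eqP; rewrite /enum_nth nth_uniq ?enum_uniq -?cardE ?cardS //.
by move/eqP/val_inj.
Qed.

Lemma imset_enum_nth : [set enum_nth S i | i : 'I_k] = S.
Proof.
apply/eqP; rewrite eqEcard card_imset ?card_ord ?cardS; last exact: enum_nth_inj.
by rewrite leqnn andbT; apply/subsetP=> _ /imsetP[i _ ->]; apply: mem_enum_nth.
Qed.

Lemma index_enum_nth (i : 'I_k) : index (enum_nth S i) (enum S) = i.
Proof. by rewrite /enum_nth index_uniq ?enum_uniq // -cardE cardS. Qed.

Lemma big_enum_nth (R : Type) (idx : R) (op : Monoid.com_law idx) (F : 'I_m -> R) :
  \big[op/idx]_(i < k) F (enum_nth S i) = \big[op/idx]_(j in S) F j.
Proof.
by rewrite -[RHS]big_enum [RHS](big_nth x0) -cardE cardS big_mkord.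
Qed.

End EnumNth.

Section InjectiveFfun.
Variables (m : nat) (x0 : 'I_m) (k : nat).
Local Notation fT := {ffun 'I_k -> 'I_m}.

(* An injection ['I_k -> 'I_m] is an increasing enumeration of its image
   precomposed with a permutation. *)
Lemma sum_injective_ffun (V : nmodType) (F : fT -> V) :
  \sum_(f : fT | injectiveb f) F f =
  \sum_(S : {set 'I_m} | #|S| == k) \sum_(s : 'S_k) F [ffun i => enum_nth x0 S (s i)].
Proof.
pose g (p : {set 'I_m} * 'S_k) := [ffun i => enum_nth x0 p.1 (p.2 i)].
rewrite pair_big_dep /=.
pose im (f : fT) := [set f i | i : 'I_k].
pose pos (f : fT) : {ffun 'I_k -> 'I_k} :=
  [ffun i => insubd i (index (f i) (enum (im f)))].
have card_im (f : fT) : injectiveb f -> #|im f| = k.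
  by move/injectiveP=> injf; rewrite card_imset ?card_ord.
have posE (f : fT) i : injectiveb f -> val (pos f i) = index (f i) (enum (im f)).
  move=> injf; rewrite ffunE insubdK // unfold_in -[X in (_ < X)%N](card_im f injf).
  by rewrite cardE index_mem mem_enum imset_f.
have nth_pos (f : fT) i : injectiveb f -> nth x0 (enum (im f)) (pos f i) = f i.
  by move=> injf; rewrite posE // nth_index // mem_enum imset_f.
have pos_inj (f : fT) : injectiveb f -> injectiveb (pos f).
  move=> injf; apply/injectiveP=> i j eij.
  by apply/(injectiveP _ injf); rewrite -!(nth_pos f) // eij.
pose h (f : fT) := (im f, insubd (1%g : 'S_k) (pos f)).
have posP (f : fT) i : injectiveb f -> (h f).2 i = pos f i.
  by move=> /pos_inj injp; rewrite -pvalE /= (insubdK (1%g : 'S_k) injp).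
rewrite (reindex_onto g h); last first.
  by move=> f injf; apply/ffunP=> i; rewrite ffunE posP // /enum_nth nth_pos.
apply: eq_bigl => -[S s] /=; rewrite andbT.
apply/andP/eqP => [[injf /eqP[<- _]]|cardS]; first exact: card_im.
have injg : injectiveb (g (S, s)).
  by apply/injectiveP=> i j; rewrite !ffunE => /(enum_nth_inj cardS)/perm_inj.
have imS : im (g (S, s)) = S.
  rewrite -[RHS](imset_enum_nth x0 cardS); apply/setP=> x.
  apply/imsetP/imsetP=> -[i _ ->]; first by exists (s i); rewrite ?ffunE.
  by exists (s^-1 i)%g; rewrite // ffunE permKV.
split=> //; apply/eqP/injective_projections; first exact: imS.
apply/permP=> i; apply: val_inj.
by rewrite posP // posE // imS ffunE index_enum_nth.
Qed.

End InjectiveFfun.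

Section CauchyBinet.
Variables (C : comNzRingType) (m : nat) (x0 : 'I_m).

Lemma det_mulmx_sum_ffun k (X : 'M[C]_(k, m)) (Y : 'M[C]_(m, k)) :
  \det (X *m Y) = \sum_(f : {ffun 'I_k -> 'I_m})
    (\prod_i X i (f i)) * \det (\matrix_(i, j) Y (f i) j).
Proof.
transitivity (\sum_(s : 'S_k) \sum_(f : {ffun 'I_k -> 'I_m})
    (-1) ^+ s * ((\prod_i X i (f i)) * \prod_i Y (f i) (s i))).
  apply: eq_bigr => s _; rewrite -big_distrr /=; congr (_ * _).
  under eq_bigr do rewrite mxE.
  by rewrite bigA_distr_bigA /=; apply: eq_bigr => f _; rewrite big_split.
rewrite exchange_big /=; apply: eq_bigr => f _; rewrite big_distrr /=.
apply: eq_bigr => s _; rewrite mulrCA; congr (_ * (_ * _)).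
by apply: eq_bigr => i _; rewrite mxE.
Qed.

Lemma cauchy_binet k (X : 'M[C]_(k, m)) (Y : 'M[C]_(m, k)) :
  \det (X *m Y) = \sum_(S : {set 'I_m} | #|S| == k)
    \det (\matrix_(i, j) X i (enum_nth x0 S j)) *
    \det (\matrix_(i, j) Y (enum_nth x0 S i) j).
Proof.
rewrite det_mulmx_sum_ffun (bigID (fun f : {ffun 'I_k -> 'I_m} => injectiveb f)) /=.
rewrite [X in _ + X]big1 ?addr0 => [|f /injectivePn[i1 [i2 ne12 e12]]]; last first.
  by rewrite (determinant_alternate ne12) ?mulr0 // => j; rewrite !mxE e12.
rewrite (sum_injective_ffun x0); apply: eq_bigr => S _.
rewrite [\det (\matrix_(i, j) X i _)]/(\det _) big_distrl /=; apply: eq_bigr => s _.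
set YS := \matrix_(i, j) Y (enum_nth x0 S i) j.
have -> : \matrix_(i, j) Y ([ffun i => enum_nth x0 S (s i)] i) j = row_perm s YS.
  by apply/matrixP=> i j; rewrite !mxE ffunE.
rewrite row_permE det_mulmx det_perm mulrCA -mulrA; congr (_ * (_ * _)).
by apply: eq_bigr => i _; rewrite ffunE mxE.
Qed.

Definition minor k (X : 'M[C]_m) (S T : {set 'I_m}) : C :=
  \det (\matrix_(i < k, j < k) X (enum_nth x0 S i) (enum_nth x0 T j)).

Lemma minor_mulmx k (X Y : 'M[C]_m) (S T : {set 'I_m}) :
  minor k (X *m Y) S T =
  \sum_(R : {set 'I_m} | #|R| == k) minor k X S R * minor k Y R T.
Proof.
rewrite /minor (_ : \matrix_(i, j) _ =
    (\matrix_(i < k, l < m) X (enum_nth x0 S i) l) *m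
    \matrix_(l < m, j < k) Y l (enum_nth x0 T j)).
  rewrite cauchy_binet; apply: eq_bigr => R _.
  by congr (_ * _); congr (\det _); apply/matrixP=> i j; rewrite !mxE.
by apply/matrixP=> i j; rewrite !mxE; apply: eq_bigr => l _; rewrite !mxE.
Qed.

Lemma minor_diag k (d : 'I_m -> C) (S T : {set 'I_m}) : #|S| = k -> #|T| = k ->
  minor k (diag_mx (\row_j d j)) S T = if S == T then \prod_(j in S) d j else 0.
Proof.
move=> cardS cardT; have [<-|neST] := eqVneq S T.
  rewrite /minor (_ : \matrix_(i, j) _ = diag_mx (\row_i d (enum_nth x0 S i))).
    by rewrite det_diag -(big_enum_nth x0 cardS); apply: eq_bigr => i _; rewrite mxE.
  by apply/matrixP=> i j; rewrite !mxE (inj_eq (enum_nth_inj cardS)).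
have [s sS sT] : exists2 s, s \in S & s \notin T.
  apply/subsetPn/negP=> sST; apply/negP: neST; apply/negPn.
  by rewrite eqEcard sST cardS cardT leqnn.
have [i0 _ si0] : exists2 i0, i0 \in 'I_k & s = enum_nth x0 S i0.
  by apply/imsetP; rewrite (imset_enum_nth x0 cardS).
rewrite /minor (expand_det_row _ i0) big1 // => j _.
rewrite !mxE -si0; case: eqP => [eq|]; last by rewrite mulr0n mul0r.
by move: sT; rewrite eq (mem_enum_nth x0 cardT j).
Qed.

Lemma det1D_mulmx k (u : 'cV[C]_k) (w : 'rV[C]_k) :
  \det (1%:M + u *m w) = 1 + (w *m u) 0 0.
Proof.
have e1 : block_mx (1%:M : 'M[C]_1) 0 u 1%:M *m block_mx 1%:M (- w) 0 (1%:M + u *m w)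
  = block_mx 1%:M (- w) u 1%:M.
  by rewrite mulmx_block !mulmx0 !mul0mx !mulmx1 !mul1mx !addr0 mulmxN addrC addrK.
have e2 : block_mx (1%:M : 'M[C]_1) (- w) 0 1%:M *m block_mx (1%:M + w *m u) 0 u 1%:M
  = block_mx 1%:M (- w) u 1%:M.
  by rewrite mulmx_block !mulmx0 !mul0mx !mulmx1 !mul1mx ?addr0 ?add0r mulNmx addrK.
have := congr1 determinant e1; rewrite -e2 !det_mulmx det_ublock det_lblock.
by rewrite det_ublock det_lblock !det1 !mul1r !mulr1 det_mx11 !mxE => ->.
Qed.

Lemma minor_1B_const k (c : C) (S : {set 'I_m}) : #|S| = k ->
  minor k (1%:M - c *: const_mx 1) S S = 1 - c *+ k.
Proof.
move=> cardS; rewrite /minor (_ : \matrix_(i, j) _ =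
    1%:M + (const_mx 1 : 'cV[C]_k) *m (const_mx (- c) : 'rV[C]_k)).
  rewrite det1D_mulmx mxE (eq_bigr (fun _ => - c)) ?sumr_const ?card_ord ?mulNrn //.
  by move=> i _; rewrite !mxE mulr1.
apply/matrixP=> i j; rewrite !mxE big_ord1 !mxE (inj_eq (enum_nth_inj cardS)).
by rewrite mulr1 mul1r.
Qed.

End CauchyBinet.

Section ConjTranspose.
Variable C : numClosedFieldType.
Local Open Scope sesquilinear_scope.

Lemma trmxC_mul m n p (X : 'M[C]_(m, n)) (Y : 'M[C]_(n, p)) :
  (X *m Y) ^t* = Y ^t* *m X ^t*.
Proof. by rewrite trmx_mul map_mxM. Qed.

Lemma minor_trmxC n (x0 : 'I_n) k (X : 'M[C]_n) (S T : {set 'I_n}) :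
  minor x0 k (X ^t*) T S = (minor x0 k X S T)^*.
Proof.
rewrite /minor -det_map_mx -det_tr; congr (\det _).
by apply/matrixP=> i j; rewrite !mxE.
Qed.

Lemma bessel_le (I J : finType) (P : pred I) (Q : pred J) (c : I -> J -> C)
    (h : I -> C) (w : J -> C) :
  (forall T T', P T -> P T' ->
     \sum_(U | Q U) (c T U)^* * c T' U = if T == T' then h T else 0) ->
  (forall T, P T -> 0 <= h T <= 1) ->
  \sum_(T | P T) `|\sum_(U | Q U) (c T U)^* * w U| ^+ 2 <= \sum_(U | Q U) `|w U| ^+ 2.
Proof.
move=> orth h01.
pose a T := \sum_(U | Q U) (c T U)^* * w U.
pose v U := \sum_(T | P T) a T * c T U.
have wv : \sum_(U | Q U) w U * (v U)^* = \sum_(T | P T) `|a T| ^+ 2.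
  rewrite /v; under eq_bigr do rewrite rmorph_sum big_distrr.
  rewrite exchange_big; apply: eq_bigr => T _ /=.
  rewrite normCK mulrC [X in _ * X]/a big_distrr; apply: eq_bigr => U _ /=.
  by rewrite rmorphM mulrCA [w U * _]mulrC.
have vw : \sum_(U | Q U) v U * (w U)^* = \sum_(T | P T) `|a T| ^+ 2.
  rewrite /v; under eq_bigr do rewrite big_distrl.
  rewrite exchange_big; apply: eq_bigr => T _ /=.
  rewrite normCK rmorph_sum big_distrr; apply: eq_bigr => U _ /=.
  by rewrite rmorphM /= conjCK mulrA.
have vv : \sum_(U | Q U) `|v U| ^+ 2 = \sum_(T | P T) `|a T| ^+ 2 * h T.
  rewrite /v; under eq_bigr do rewrite normCK rmorph_sum big_distrlr.
  rewrite exchange_big; apply: eq_bigr => T PT /=; rewrite exchange_big /=.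
  have cross T' : P T' -> \sum_(U | Q U) a T * c T U * (a T' * c T' U)^* =
      a T * (a T')^* * (if T' == T then h T' else 0).
    move=> PT'; rewrite -orth // big_distrr /=; apply: eq_bigr => U _.
    by rewrite rmorphM; ring.
  rewrite (bigD1 T) //= cross // eqxx normCK big1 ?addr0 // => T' /andP[PT' neT'].
  by rewrite cross // (negbTE neT') mulr0.
have expand : \sum_(U | Q U) `|w U - v U| ^+ 2 =
    \sum_(U | Q U) `|w U| ^+ 2 - \sum_(T | P T) `|a T| ^+ 2 * (2 - h T).
  rewrite (eq_bigr (fun U => `|w U| ^+ 2 - (w U * (v U)^* + v U * (w U)^*)
      + `|v U| ^+ 2)) => [|U _]; last by rewrite !normCK rmorphB /=; ring.
  rewrite big_split sumrB big_split /= wv vw vv.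
  under [X in _ = _ - X]eq_bigr do rewrite mulrBr mulr_natr mulr2n.
  by rewrite sumrB big_split /=; ring.
have : 0 <= \sum_(U | Q U) `|w U - v U| ^+ 2
  by apply: sumr_ge0 => U _; exact/exprn_ge0/normr_ge0.
rewrite expand subr_ge0; apply: le_trans; apply: ler_sum => T PT.
rewrite ler_peMr ?exprn_ge0 // lerBrDl.
by case/andP: (h01 T PT) => _ h1; have := lerD h1 (lexx (1 : C)).
Qed.

Lemma normr_mul_le_mean_sqr (x y : C) : `|x| * `|y| <= (`|x| ^+ 2 + `|y| ^+ 2) / 2.
Proof.
have := exprn_ge0 2 (normr_ge0 (`|x| - `|y|)).
rewrite real_normK ?realB ?normr_real // sqrrB addrAC subr_ge0.
by rewrite ler_pdivlMr ?ltr0n // mulr_natr.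
Qed.

End ConjTranspose.

Section CompoundBound.
Variables (C : numClosedFieldType) (n : nat) (x0 : 'I_n) (k : nat).
Variables (Q V G : 'M[C]_n) (z mu h : 'I_n -> C) (q : C).
Local Open Scope sesquilinear_scope.
Hypothesis GAV : G ^t* *m (Q *m diag_mx (\row_j z j) *m Q) *m V = diag_mx (\row_j mu j).
Hypothesis GG : G ^t* *m G = diag_mx (\row_j h j).
Hypothesis h01 : forall j, 0 <= h j <= 1.
Hypothesis VV : V *m V ^t* = 1%:M.
Hypothesis Q_herm : Q ^t* = Q.
Hypothesis Q_idem : Q *m Q = Q.
Hypothesis minorQ : forall S : {set 'I_n}, #|S| = k -> minor x0 k Q S S = q.

Local Notation minor := (minor x0 k).
Let X := G ^t* *m Q.
Let Y := Q *m V.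

Lemma prod_minor_expand (T : {set 'I_n}) : #|T| = k ->
  \prod_(j in T) mu j =
  \sum_(S : {set 'I_n} | #|S| == k) minor X T S * \prod_(i in S) z i * minor Y S T.
Proof.
move=> cardT.
have XDY : X *m diag_mx (\row_j z j) *m Y = diag_mx (\row_j mu j).
  by rewrite /X /Y !mulmxA -GAV !mulmxA.
have -> : \prod_(j in T) mu j = minor (diag_mx (\row_j mu j)) T T.
  by rewrite minor_diag // eqxx.
rewrite -XDY minor_mulmx; apply: eq_bigr => S /eqP cardS; congr (_ * _).
rewrite minor_mulmx (bigD1 S) ?cardS //= minor_diag // eqxx [s in _ + s]big1 ?addr0 //.
by move=> R /andP[/eqP cardR neRS]; rewrite minor_diag // (negbTE neRS) mulr0.
Qed.

Lemma sum_sqr_minor_right (S : {set 'I_n}) : #|S| = k ->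
  \sum_(T : {set 'I_n} | #|T| == k) `|minor Y S T| ^+ 2 = q.
Proof.
move=> cardS; rewrite -(minorQ cardS).
have -> : Q = Y *m Y ^t*.
  by rewrite /Y trmxC_mul mulmxA -[Q *m V *m _]mulmxA VV mulmx1 Q_herm Q_idem.
by rewrite minor_mulmx; apply: eq_bigr => T _; rewrite minor_trmxC normCK.
Qed.

Lemma sum_sqr_minor_left_le (S : {set 'I_n}) : #|S| = k ->
  \sum_(T : {set 'I_n} | #|T| == k) `|minor X T S| ^+ 2 <= q.
Proof.
move=> cardS.
have XE T : minor X T S =
    \sum_(U : {set 'I_n} | #|U| == k) (minor G U T)^* * minor Q U S.
  by rewrite minor_mulmx; apply: eq_bigr => U _; rewrite minor_trmxC.
under eq_bigr do rewrite XE.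
apply: le_trans (bessel_le (c := fun T U => minor G U T)
  (h := fun T => \prod_(j in T) h j) (fun U => minor Q U S) _ _) _.
- move=> T T' /eqP cardT /eqP cardT'.
  rewrite -(minor_diag x0 h cardT cardT') -GG minor_mulmx.
  by apply: eq_bigr => U _; rewrite minor_trmxC.
- by move=> T _; rewrite prodr_ge0 ?prodr_ile1 // => j _; case/andP: (h01 j).
have QQ : Q = Q ^t* *m Q by rewrite Q_herm Q_idem.
rewrite -(minorQ cardS) [in X in _ <= X]QQ minor_mulmx le_eqVlt; apply/orP; left.
by apply/eqP; apply: eq_bigr => U _; rewrite minor_trmxC normCK mulrC.
Qed.

Lemma esymf_compound_le : `|esymf k mu| <= q * esymf k (fun i => `|z i|).
Proof.
rewrite /esymf; under eq_bigr => T /eqP cardT do rewrite (prod_minor_expand cardT).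
rewrite exchange_big /=; apply: le_trans (ler_norm_sum _ _ _) _.
rewrite big_distrr /=; apply: ler_sum => S /eqP cardS.
apply: le_trans (ler_norm_sum _ _ _) _.
under [s in s <= _]eq_bigr do rewrite !normrM normr_prod mulrAC.
rewrite -big_distrl /= ler_wpM2r ?prodr_ge0 //.
apply: le_trans (ler_sum _ (fun T _ => normr_mul_le_mean_sqr _ _)) _.
rewrite -mulr_suml big_split /= sum_sqr_minor_right // ler_pdivrMr ?ltr0n //.
by rewrite mulr_natr mulr2n lerD2r sum_sqr_minor_left_le.
Qed.

End CompoundBound.

Lemma char_poly_similar (F : fieldType) n (P X : 'M[F]_n) :
  P \in unitmx -> char_poly (invmx P *m X *m P) = char_poly X.
Proof.
move=> Pu; rewrite /char_poly /char_poly_mx.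
have -> : 'X%:M - map_mx (@polyC F) (invmx P *m X *m P) =
    map_mx (@polyC F) (invmx P) *m ('X%:M - map_mx (@polyC F) X) *m map_mx (@polyC F) P.
  rewrite mulmxBr mulmxBl !map_mxM /= -!mulmxA; congr (_ - _).
  by rewrite mul_scalar_mx -scalemxAr -map_mxM mulVmx // map_mx1 scalemx1.
rewrite !det_mulmx !det_map_mx /= mulrC mulrA -polyCM -det_mulmx mulmxV //.
by rewrite det1 mul1r.
Qed.

Definition centering_mx (F : fieldType) n : 'M[F]_n := 1%:M - n%:R^-1 *: const_mx 1.

Lemma centering_mx_idem (F : fieldType) n : n%:R != 0 :> F ->
  centering_mx F n *m centering_mx F n = centering_mx F n.
Proof.
move=> n_neq0.
have JJ : (const_mx 1 : 'M[F]_n) *m (const_mx 1 : 'M[F]_n) = n%:R *: const_mx 1.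
  apply/matrixP=> i j; rewrite !mxE (eq_bigr (fun _ => 1)) => [|l _]; last first.
    by rewrite !mxE mulr1.
  by rewrite sumr_const card_ord mulr1 -mulr_natl mulr1.
rewrite /centering_mx mulmxBl !mulmxBr mul1mx mulmx1 -scalemxAl mul1mx.
by rewrite -scalemxAr JJ !scalerA mulrAC mulVf // mul1r subrr subr0.
Qed.

Section SingularValues.
Variable C : numClosedFieldType.
Local Open Scope sesquilinear_scope.

Lemma centering_mx_herm n : (centering_mx C n) ^t* = centering_mx C n.
Proof.
apply/matrixP=> i j; rewrite !mxE rmorphB rmorphM /= fmorphV !rmorph_nat.
by rewrite rmorph1 eq_sym.
Qed.

Lemma gram_spectral n (A : 'M[C]_n) : exists V (d : 'I_n -> C),
  [/\ V *m V ^t* = 1%:M, (A *m V) ^t* *m (A *m V) = diag_mx (\row_j d j),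
      forall j, 0 <= d j & char_poly (A ^t* *m A) = \prod_j ('X - (d j)%:P)].
Proof.
set M := A ^t* *m A; set P := spectralmx M; set d := spectral_diag M.
have normM : M \is normalmx by apply/normalmxP; rewrite /M trmxC_mul trmxCK.
have Pu : P \is unitarymx := spectral_unitarymx M.
have eM : M = invmx P *m diag_mx d *m P := orthomx_spectralP normM.
have dE : \row_j d 0 j = d by apply/rowP=> j; rewrite mxE.
have AP : (A *m P ^t*) ^t* *m (A *m P ^t*) = diag_mx d.
  rewrite trmxC_mul trmxCK -mulmxA (mulmxA _ A) -/M eM invmx_unitary //.
  by rewrite !mulmxA (unitarymxP Pu) mul1mx mulmxtVK.
exists (P ^t*), (fun j => d 0 j); split; rewrite ?dE //.
- by apply/unitarymxP; rewrite trmxC_unitary.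
- move=> j; have := congr1 (fun X : 'M[C]_n => X j j) AP.
  rewrite /= mxE [diag_mx d j j]mxE eqxx mulr1n => <-.
  by apply: sumr_ge0 => i _; rewrite !mxE mulrC mul_conjC_ge0.
rewrite eM char_poly_similar ?unitarymx_unit // char_poly_trig ?diag_mx_is_trig //.
by apply: eq_bigr => j _; rewrite mxE eqxx mulr1n.
Qed.

(* Normalizing the nonzero columns of [B] (using [0^-1 = 0]) turns it into a
   partial isometry. *)
Lemma gram_diag_partial_isometry n (B : 'M[C]_n) (mu : 'I_n -> C) :
  (forall j, 0 <= mu j) -> B ^t* *m B = diag_mx (\row_j mu j ^+ 2) ->
  exists G (h : 'I_n -> C), [/\ G ^t* *m B = diag_mx (\row_j mu j),
    G ^t* *m G = diag_mx (\row_j h j) & forall j, 0 <= h j <= 1].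
Proof.
move=> mu_ge0 BB; pose g := \row_j (mu j)^-1.
have gC : diag_mx g ^t* = diag_mx g.
  rewrite tr_diag_mx map_diag_mx; congr diag_mx; apply/rowP=> j.
  by rewrite !mxE /= conj_Creal // realV ger0_real.
have inv_sqr (x : C) : x^-1 * x ^+ 2 = x.
  by have [->|x_neq0] := eqVneq x 0; rewrite ?invr0 ?mul0r // expr2 mulKf.
exists (B *m diag_mx g), (fun j => (mu j)^-1 * mu j ^+ 2 * (mu j)^-1); split.
- rewrite trmxC_mul gC -mulmxA BB mulmx_diag; congr diag_mx.
  by apply/rowP=> j; rewrite !mxE inv_sqr.
- rewrite trmxC_mul gC mulmxA -(mulmxA _ _ B) BB !mulmx_diag.
  by congr diag_mx; apply/rowP=> j; rewrite !mxE.
move=> j; rewrite inv_sqr; have [->|mu_neq0] := eqVneq (mu j) 0.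
  by rewrite mul0r lexx ler01.
by rewrite mulfV // ler01 lexx.
Qed.

Lemma esymf_centered_le n k (z : 'I_n -> C) : (0 < n)%N ->
  let A := centering_mx C n *m diag_mx (\row_j z j) *m centering_mx C n in
  exists mu : 'I_n -> C, [/\ forall j, 0 <= mu j,
    char_poly (A ^t* *m A) = \prod_j ('X - (mu j ^+ 2)%:P)
  & `|esymf k mu| <= (1 - n%:R^-1 *+ k) * esymf k (fun i => `|z i|)].
Proof.
move=> n_gt0 A; have [V [d [VV AV d_ge0 charA]]] := gram_spectral A.
pose mu j := sqrtC (d j).
have mu_ge0 j : 0 <= mu j by rewrite sqrtC_ge0.
have dE : \row_j d j = \row_j mu j ^+ 2 by apply/rowP=> j; rewrite !mxE sqrtCK.
rewrite dE in AV; have [G [h [GAV GG h01]]] := gram_diag_partial_isometry mu_ge0 AV.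
exists mu; split=> //.
  by rewrite charA; apply: eq_bigr => j _; rewrite sqrtCK.
apply: (esymf_compound_le (x0 := Ordinal n_gt0) (Q := centering_mx C n) (V := V)
  (G := G) (h := h)) => //.
- by rewrite mulmxA in GAV.
- exact: centering_mx_herm.
- by apply: centering_mx_idem; rewrite pnatr_eq0 -lt0n.
- by move=> S cardS; apply: minor_1B_const.
Qed.

End SingularValues.

Lemma esymf_coef_prod_XsubC (R : idomainType) n k (v : 'I_n -> R) : (k <= n)%N ->
  esymf k v = (-1) ^+ k * (\prod_(i < n) ('X - (v i)%:P))`_(n - k).
Proof.
move=> le_kn; have := mroots_coeff [tuple v i | i < n] (Ordinal (le_kn : (k < n.+1)%N)).
rewrite big_tuple /=.
under eq_bigr do rewrite tnth_mktuple.
move=> ->; rewrite mulrA -exprMn mulrNN mulr1 expr1n mul1r.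
rewrite /mesym rmorph_sum; apply: eq_bigr => S _.
by rewrite rmorph_prod; apply: eq_bigr => i _ /=; rewrite mevalXU tnth_mktuple.
Qed.

Lemma esymf_perm_eq (R : idomainType) n k (s t : 'I_n -> R) : (k <= n)%N ->
  perm_eq [seq s i | i <- enum 'I_n] [seq t i | i <- enum 'I_n] ->
  esymf k s = esymf k t.
Proof.
move=> le_kn st; rewrite !esymf_coef_prod_XsubC //.
have prodE (u : 'I_n -> R) : \prod_(i < n) ('X - (u i)%:P) =
    \prod_(x <- [seq u i | i <- enum 'I_n]) ('X - x%:P).
  by rewrite big_map big_enum.
by rewrite !prodE (perm_big _ st).
Qed.

(* Nonnegative numbers are determined, up to order, by their squares. *)
Lemma esymf_eq_sqr (C : numClosedFieldType) n k (s t : 'I_n -> C) : (k <= n)%N ->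
  (forall i, 0 <= s i) -> (forall i, 0 <= t i) ->
  \prod_(i < n) ('X - (s i ^+ 2)%:P) = \prod_(i < n) ('X - (t i ^+ 2)%:P) ->
  esymf k s = esymf k t.
Proof.
move=> le_kn s_ge0 t_ge0 st; apply: esymf_perm_eq => //.
have sqrtE (u : 'I_n -> C) : (forall i, 0 <= u i) ->
    [seq u i | i <- enum 'I_n] = map sqrtC [seq u i ^+ 2 | i <- enum 'I_n].
  by move=> u_ge0; rewrite -[RHS]map_comp; apply: eq_map => i /=; rewrite sqrCK.
rewrite (sqrtE s) // (sqrtE t) //; apply/perm_map/prod_XsubC_eq.
by rewrite !big_map; exact: st.
Qed.

Lemma rmorph_esymf (R S : comNzRingType) (f : {rmorphism R -> S}) m k (v : 'I_m -> R) :
  f (esymf k v) = esymf k (fun i => f (v i)).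
Proof.
by rewrite rmorph_sum; apply: eq_bigr => T _; rewrite rmorph_prod.
Qed.

Lemma esymf_ge0 (R : numDomainType) m k (v : 'I_m -> R) :
  (forall i, 0 <= v i) -> 0 <= esymf k v.
Proof. by move=> v_ge0; apply: sumr_ge0 => S _; apply: prodr_ge0. Qed.

Lemma esymf_comp_inj_le (R : numDomainType) m n k (v : 'I_n -> R) (w : 'I_m -> 'I_n) :
  injective w -> (forall i, 0 <= v i) -> esymf k (fun i => v (w i)) <= esymf k v.
Proof.
move=> w_inj v_ge0.
pose Img := (fun S : {set 'I_m} => w @: S) @: [set S : {set 'I_m} | #|S| == k].
have -> : esymf k (fun i => v (w i)) = \sum_(S in Img) \prod_(j in S) v j.
  rewrite big_imset /= => [|S1 S2 _ _]; last exact: imset_inj.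
  apply: eq_big => [S|S _]; first by rewrite inE.
  by rewrite big_imset // => i j _ _; apply: w_inj.
have -> : \sum_(S in Img) \prod_(j in S) v j =
    \sum_(S : {set 'I_n} | (#|S| == k) && (S \in Img)) \prod_(j in S) v j.
  apply: eq_bigl => S; apply/idP/andP=> [SI|[]//]; split=> //.
  by case/imsetP: SI => S'; rewrite inE => /eqP <- ->; rewrite card_imset.
rewrite /esymf [leRHS](bigID (mem Img)) /= lerDl.
by apply: sumr_ge0 => S _; apply: prodr_ge0.
Qed.

Lemma adjC_trmxC (R : rcfType) m n (A : 'M[R[i]]_(m, n)) :
  adjC A = (A ^t*)%sesqui.
Proof. by rewrite /adjC map_trmx. Qed.

Theorem proposition4p2 (R : realType) (n : nat) (hn : (2 <= n)%N)
  (z : 'I_n -> R[i]) (sigma : 'I_n -> R) :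
  let D : 'M[R[i]]_n := diag_mx (\row_j z j) in
  let Q : 'M[R[i]]_n := 1%:M - (n%:R)^-1 *: const_mx 1 in
  let A : 'M[R[i]]_n := Q *m D *m Q in
  singular_values_of A sigma ->
  forall k : nat, (1 <= k <= n.-1)%N ->
    esymf k (fun i : 'I_n.-1 => sigma (widen_ord (leq_pred n) i))
    <= ((n - k)%:R / n%:R) * esymf k (fun i => Normc.normc (z i)).
Proof.
move=> D Q A [sigma_ge0 _ charA] k /andP[_ le_k_n1].
have n_gt0 : (0 < n)%N by apply: leq_trans hn.
have le_kn : (k <= n)%N := leq_trans le_k_n1 (leq_pred n).
have [mu [mu_ge0 charA' le_mu]] := esymf_centered_le k z n_gt0.
have mu_sigma : esymf k mu = (esymf k sigma)%:C%C.
  rewrite rmorph_esymf; apply: esymf_eq_sqr => // [i|]; first by rewrite lecR.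
  by rewrite -charA' -adjC_trmxC charA; apply: eq_bigr => i _; rewrite rmorphXn.
have q_eq : ((n - k)%:R / n%:R : R) = 1 - n%:R^-1 *+ k.
  by rewrite natrB // mulrBl divff ?pnatr_eq0 -?lt0n // mulrC mulr_natr.
have widen_inj : injective (widen_ord (leq_pred n)).
  by move=> i j /(congr1 val) /= /val_inj.
apply: le_trans (esymf_comp_inj_le k widen_inj sigma_ge0) _.
rewrite -lecR -mu_sigma -[esymf k mu]ger0_norm ?esymf_ge0 //.
rewrite rmorphM rmorph_esymf q_eq rmorphB rmorphMn fmorphV rmorph_nat rmorph1.
exact: le_mu.
Qed.
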